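(* Let $d:a\mapsto a'$ be a Hardy type series derivation on $\mathbb{K}$. Let $a\in\mathbb{K}^*$ with $a\not\asymp\hat\theta$, and set $\alpha=\mathrm{LM}(a)$. Let $\psi_\alpha\in\Phi$ be the unique fundamental monomial with $\mathrm{LF}(\alpha/\theta^{(\psi_\alpha)})=\psi_\alpha$, and put $$m=\frac{\alpha}{\mathrm{LE}\!\left(\alpha/\theta^{(\psi_\alpha)}\right)\,\mathrm{LT}\!\left(\psi_\alpha'/\psi_\alpha\right)}.$$ Then $m$ is an asymptotic integral of $\alpha$, namely $\mathrm{LT}(m')=\alpha$, and $\mathrm{LC}(a)\,m$ is an asymptotic integral of $a$, namely $\mathrm{LT}\big((\mathrm{LC}(a)m)'\big)=\mathrm{LT}(a)$. (These are denoted $\mathrm{a.i.}(\alpha)=m$ and $\mathrm{a.i.}(a)=\mathrm{LC}(a)\,\mathrm{a.i.}(\alpha)$.)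
   Context: Let $(\Phi,\preccurlyeq)$ be a totally ordered set; $\mathbf{H}(\Phi)$ is the group of formal products $\gamma=\prod_{\phi}\phi^{\gamma_\phi}$, $\gamma_\phi\in\mathbb{R}$, with anti-well-ordered support $\operatorname{supp}\gamma$, pointwise multiplication and anti-lexicographic order ($\gamma\succ1$ iff the exponent of $\max\operatorname{supp}\gamma$ is positive); $\Phi\subseteq\mathbf H(\Phi)$ via $\phi=\phi^1$. Fix a subgroup $\Gamma\supseteq\Phi$. For $1\ne\gamma$: $\mathrm{LF}(\gamma)=\max\operatorname{supp}\gamma$, $\mathrm{LE}(\gamma)=\gamma_{\mathrm{LF}(\gamma)}$. $\mathbb{K}=\mathbb{R}((\Gamma))$: formal series with anti-well-ordered support in $\Gamma$; for $a\ne0$, $\mathrm{LM}(a)$ is the largest monomial of the support, $\mathrm{LC}(a)$ its coefficient, $\mathrm{LT}(a)=\mathrm{LC}(a)\mathrm{LM}(a)$; $a\preccurlyeq b$ iff $\mathrm{LM}(a)\preccurlyeq\mathrm{LM}(b)$, $a\asymp b$ iff equal leading monomials; $|a|=\max(\mathrm{LM}(a),\mathrm{LM}(a)^{-1})$; $a,b\succ1$ comparable iff $\mathrm{LF}(\mathrm{LM}(a))=\mathrm{LF}(\mathrm{LM}(b))$. Summable families: union of supports anti-well-ordered, each monomial in finitely many supports. Series derivation: map $a\mapsto a'$ with $1'=0$, $\alpha'=\alpha\sum_{\phi\in\operatorname{supp}\alpha}\alpha_\phi\phi'/\phi$, $a'=\sum a_\alpha\alpha'$ (summable families). Hardy type: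 (HD1) constants $=\mathbb{R}$; (HD2) for $a,b\in\mathbb{K}^*$, $a,b\not\asymp1$: $a\preccurlyeq b\iff a'\preccurlyeq b'$; (HD3) for $|a|\succ|b|\succ1$: $a'/a\succcurlyeq b'/b$, with $\asymp$ iff $a,b$ comparable. $\theta^{(\phi)}=\mathrm{LM}(\phi'/\phi)$; $\hat\theta$ is the greatest lower bound of $\{\theta^{(\phi)}:\phi\in\Phi\}$ in $\Gamma$ if it exists (the condition $a\not\asymp\hat\theta$ is vacuous otherwise). For $\alpha\in\Gamma$, $\alpha\neq\hat\theta$, a unique $\psi_\alpha\in\Phi$ with $\mathrm{LF}(\alpha/\theta^{(\psi_\alpha)})=\psi_\alpha$ exists. $b$ is an asymptotic integral of $a$ if $b'\sim a$, i.e. $\mathrm{LT}(b')=\mathrm{LT}(a)$. *)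

From mathcomp Require Import all_boot all_order all_algebra.
From mathcomp Require Import all_classical all_reals.
Import Order.TTheory GRing.Theory Num.Theory.

Set Implicit Arguments.
Unset Strict Implicit.
Unset Printing Implicit Defensive.

Local Open Scope classical_set_scope.
Local Open Scope ring_scope.

Section Hahn.
Variables (d : Order.disp_t) (Phi : orderType d) (R : realType).

Definition anti_wo {T : Type} (le : T -> T -> Prop) (S : set T) : Prop :=
  forall A : set T, A `<=` S -> A !=set0 ->
    exists2 m, A m & forall x, A x -> le x m.

(** elements of H(Phi): gamma = prod_phi phi^(gamma phi), stored as the
    exponent function (well-formedness [isH] = anti-well-ordered support) *)
Definition hexp := Phi -> R.
Definition hsupp (g : hexp) : set Phi := [set p | g p != 0].
Definition isH (g : hexp) : Prop := anti_wo (fun x y => (x <= y)%O) (hsupp g).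
Definition hone : hexp := fun _ => 0.
Definition hmul (g h : hexp) : hexp := fun p => g p + h p.
Definition hinv (g : hexp) : hexp := fun p => - g p.
Definition hdiv (g h : hexp) : hexp := hmul g (hinv h).
Definition fund (p : Phi) : hexp := fun q => if q == p then 1 else 0.

Definition is_LF (g : hexp) (p : Phi) : Prop :=
  g p != 0 /\ forall q, g q != 0 -> (q <= p)%O.
Definition LE (g : hexp) : R := xget 0 [set e | exists p, is_LF g p /\ g p = e].

Definition hgt1 (g : hexp) : Prop := exists p, is_LF g p /\ 0 < g p.
Definition hlt (g h : hexp) : Prop := hgt1 (hdiv h g).
Definition hle (g h : hexp) : Prop := g = h \/ hlt g h.
Definition hmax (g h : hexp) : hexp := if pselect (hle h g) then g else h.

Definition value_group (G : set hexp) : Prop :=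
  (forall g, G g -> isH g) /\ G hone /\
  (forall g h, G g -> G h -> G (hmul g h)) /\
  (forall g, G g -> G (hinv g)) /\
  (forall p, G (fund p)).

(** formal series with coefficients in R and monomials in H(Phi);
    K = R((Gamma)) is the set of those satisfying [isK G] *)
Definition series := hexp -> R.
Definition ssupp (a : series) : set hexp := [set g | a g != 0].
Definition isK (G : set hexp) (a : series) : Prop :=
  ssupp a `<=` G /\ anti_wo hle (ssupp a).
Definition s0 : series := fun _ => 0.
Definition smon (c : R) (g : hexp) : series :=
  fun h => if pselect (h = g) then c else 0.
Definition sscale (c : R) (a : series) : series := fun h => c * a h.
Definition smulm (a : series) (g : hexp) : series := fun h => a (hdiv h g).

Definition is_LM (a : series) (g : hexp) : Prop :=
  a g != 0 /\ forall h, a h != 0 -> hle h g.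
Definition LM (a : series) : hexp := xget hone [set g | is_LM a g].
Definition LC (a : series) : R := a (LM a).
Definition LT (a : series) : series := smon (LC a) (LM a).
Definition sle (a b : series) : Prop := hle (LM a) (LM b).
Definition sabs (a : series) : hexp := hmax (LM a) (hinv (LM a)).
Definition comparable (a b : series) : Prop :=
  exists p, is_LF (LM a) p /\ is_LF (LM b) p.

Definition summable {I : Type} (S : set I) (F : I -> series) : Prop :=
  anti_wo hle (\bigcup_(i in S) ssupp (F i)) /\
  forall g, finite_set [set i | S i /\ F i g != 0].
Definition ssum {I : choiceType} (S : set I) (F : I -> series) : series :=
  fun g => \sum_(i \in S) F i g.

Definition series_derivation (G : set hexp) (D : series -> series) : Prop :=
  (forall a, isK G a -> isK G (D a)) /\
  D (smon 1 hone) = s0 /\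
  (forall al, G al ->
     let F := fun p => sscale (al p) (smulm (D (smon 1 (fund p))) (hinv (fund p))) in
     summable (hsupp al) F /\ D (smon 1 al) = smulm (ssum (hsupp al) F) al) /\
  (forall a, isK G a ->
     let F := fun g => sscale (a g) (D (smon 1 g)) in
     summable (ssupp a) F /\ D a = ssum (ssupp a) F).

(** Hardy type: (HD1), (HD2), (HD3). In (HD3), a'/a >= b'/b is expressed
    via leading monomials: LM(a'/a) = LM(a')/LM(a). *)
Definition hardy_type (G : set hexp) (D : series -> series) : Prop :=
  series_derivation G D /\
  (forall a, isK G a -> (D a = s0 <-> exists c : R, a = smon c hone)) /\
  (forall a b, isK G a -> isK G b -> a <> s0 -> b <> s0 ->
     LM a <> hone -> LM b <> hone ->
     (sle a b <-> sle (D a) (D b))) /\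
  (forall a b, isK G a -> isK G b -> a <> s0 -> b <> s0 ->
     hlt (sabs b) (sabs a) -> hlt hone (sabs b) ->
     hle (hdiv (LM (D b)) (LM b)) (hdiv (LM (D a)) (LM a)) /\
     (hdiv (LM (D a)) (LM a) = hdiv (LM (D b)) (LM b) <-> comparable a b)).

Definition dlog (D : series -> series) (p : Phi) : series :=
  smulm (D (smon 1 (fund p))) (hinv (fund p)).
Definition theta (D : series -> series) (p : Phi) : hexp := LM (dlog D p).

Definition is_theta_hat (G : set hexp) (D : series -> series) (t : hexp) : Prop :=
  G t /\ (forall p, hle t (theta D p)) /\
  (forall y, G y -> (forall p, hle y (theta D p)) -> hle y t).

Definition ai_mon (D : series -> series) (al : hexp) (psi : Phi) : series :=
  smon (LE (hdiv al (theta D psi)) * LC (dlog D psi))^-1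
       (hdiv al (theta D psi)).

End Hahn.
Arguments s0 {d Phi R}.
Arguments hone {d Phi R}.

From mathcomp Require Import all_boot all_order all_algebra.
From mathcomp Require Import all_classical all_reals.
From mathcomp Require Import ring.
Import Order.TTheory GRing.Theory Num.Theory.

Set Implicit Arguments.
Unset Strict Implicit.
Unset Printing Implicit Defensive.

(* Write alpha = LM a and beta = alpha / theta^(psi), so that LF beta = psi.
   By the series-derivation rule for monomials,
   beta' = beta * sum_(phi in supp beta) beta_phi phi'/phi.  Every phi in the
   support satisfies phi <= psi, and (HD3) applied to the incomparable
   elements phi < psi gives theta^(phi) < theta^(psi); hence the sum has
   leading term beta_psi LT(psi'/psi), and LT(beta') is
   beta_psi LC(psi'/psi) * theta^(psi) * beta = beta_psi LC(psi'/psi) * alpha.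
   Dividing by this constant (and multiplying by LC a) gives both claims. *)

Local Open Scope classical_set_scope.
Local Open Scope ring_scope.

Section HahnGroup.
Variables (d : Order.disp_t) (Phi : orderType d) (R : realType).
Implicit Types (g h k : hexp Phi R) (p q : Phi).

Lemma is_LF_uniq g p q : is_LF g p -> is_LF g q -> p = q.
Proof. by move=> [gp Hp] [gq Hq]; apply/le_anti; rewrite Hq // Hp. Qed.

Lemma LE_is_LF g p : is_LF g p -> LE g = g p.
Proof.
move=> Hp; apply: xget_unique; first by exists p.
by move=> _ [q [Hq <-]]; rewrite (is_LF_uniq Hq Hp).
Qed.

Lemma is_LF_fund p : is_LF (fund R p) p.
Proof.
split=> [|q]; rewrite /fund; first by rewrite eqxx oner_eq0.
by case: (q =P p) => [-> _|_]; rewrite ?eqxx.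
Qed.

Lemma hgt1_fund p : hgt1 (fund R p).
Proof. by exists p; split; [exact: is_LF_fund | rewrite /fund eqxx ltr01]. Qed.

Lemma fund_neq1 p : fund R p <> hone.
Proof. by move/(congr1 (fun g => g p)) => /eqP; rewrite /fund eqxx oner_eq0. Qed.

Lemma hgt1_mul g h : hgt1 g -> hgt1 h -> hgt1 (hmul g h).
Proof.
move=> [p [[gp Hp] g_pos]] [q [[hq Hq] h_pos]].
have supp_mul r : hmul g h r != 0 -> (r <= p)%O \/ (r <= q)%O.
  rewrite /hmul; have [->|/Hp] := eqVneq (g r) 0; last by left.
  by rewrite add0r => /Hq; right.
have vanish_above (f : hexp Phi R) s t :
    (forall r, f r != 0 -> (r <= s)%O) -> (s < t)%O -> f t = 0.
  by move=> Hf st; apply/eqP; apply: contraTT st => /Hf; rewrite leNgt.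
case: (ltgtP p q) => [pq|qp|pq]; last subst q.
- have gq0 := vanish_above _ _ _ Hp pq.
  exists q; split; [split|]; rewrite /hmul ?gq0 ?add0r ?gt_eqF //.
  by move=> r /supp_mul [rp|//]; rewrite (le_trans rp) ?ltW.
- have hp0 := vanish_above _ _ _ Hq qp.
  exists p; split; [split|]; rewrite /hmul ?hp0 ?addr0 ?gt_eqF //.
  by move=> r /supp_mul [//|rq]; rewrite (le_trans rq) ?ltW.
- have gh_pos : 0 < g p + h p by rewrite addr_gt0.
  by exists p; split=> //; split=> [|r /supp_mul []]; rewrite ?gt_eqF.
Qed.

Lemma hlt_trans g h k : hlt g h -> hlt h k -> hlt g k.
Proof.
rewrite /hlt => gh hk.
have -> : hdiv k g = hmul (hdiv k h) (hdiv h g).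
  by apply: funext => p; rewrite /hdiv /hmul /hinv; ring.
exact: hgt1_mul.
Qed.

Lemma hlt_irr g : ~ hlt g g.
Proof. by move=> [p [[/eqP + _] _]]; rewrite /hdiv /hmul /hinv subrr. Qed.

Lemma hle_trans g h k : hle g h -> hle h k -> hle g k.
Proof. by case=> [->//|gh] [<-|hk]; right=> //; exact: hlt_trans hk. Qed.

Lemma hle_lt_trans g h k : hle g h -> hlt h k -> hlt g k.
Proof. by case=> [->//|gh] /(hlt_trans gh). Qed.

Lemma hle_anti g h : hle g h -> hle h g -> g = h.
Proof. by case=> [//|gh] [//|/(hlt_trans gh) /hlt_irr]. Qed.

Lemma hle_mulr g h k : hle g h -> hle (hmul g k) (hmul h k).
Proof.
case=> [->|gh]; [by left | right; rewrite /hlt].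
suff -> : hdiv (hmul h k) (hmul g k) = hdiv h g by [].
by apply: funext => p; rewrite /hdiv /hmul /hinv; ring.
Qed.

Lemma hlt_fund p q : (p < q)%O -> hlt (fund R p) (fund R q).
Proof.
move=> pq; rewrite /hlt /hdiv /hmul /hinv /fund.
exists q; split; last by rewrite /= eqxx (gt_eqF pq) oppr0 addr0 ltr01.
split=> [|r] /=; first by rewrite eqxx (gt_eqF pq) oppr0 addr0 oner_eq0.
case: (r =P q) => [->//|_].
by case: (r =P p) => [->|_]; rewrite ?oppr0 ?addr0 ?eqxx // => _; rewrite ltW.
Qed.

Lemma hlt1_fund p : hlt hone (fund R p).
Proof.
rewrite /hlt; suff -> : hdiv (fund R p) hone = fund R p by exact: hgt1_fund.
by apply: funext => q; rewrite /hdiv /hmul /hinv /hone oppr0 addr0.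
Qed.

End HahnGroup.

Section Series.
Variables (d : Order.disp_t) (Phi : orderType d) (R : realType).
Implicit Types (g h k : hexp Phi R) (x : series Phi R) (c : R).

Lemma is_LM_uniq x g h : is_LM x g -> is_LM x h -> g = h.
Proof. by move=> [xg Hg] [xh Hh]; apply: hle_anti; [apply: Hh | apply: Hg]. Qed.

Lemma LM_is_LM x g : is_LM x g -> LM x = g.
Proof. by move=> xg; apply: xget_unique => // h /is_LM_uniq; apply. Qed.

Lemma is_LM_exists G x : isK G x -> x <> s0 -> exists g, is_LM x g.
Proof.
move=> [_ wo] x0.
have [g xg] : exists g, x g != 0.
  apply: contrapT => supp0; apply: x0; apply: funext => g.
  by apply/eqP; apply: contrapT => /negP xg; apply: supp0; exists g.
by have [m xm Hm] := wo _ (@subset_refl _ _) (ex_intro _ g xg); exists m.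
Qed.

Lemma is_LM_smulm x g h : is_LM x g -> is_LM (smulm x h) (hmul g h).
Proof.
have hmulK k : hdiv (hmul k h) h = k.
  by apply: funext => p; rewrite /hdiv /hmul /hinv; ring.
move=> [xg Hg]; split=> [|k]; first by rewrite /smulm hmulK.
move/Hg/(hle_mulr h); suff -> : hmul (hdiv k h) h = k by [].
by apply: funext => p; rewrite /hdiv /hmul /hinv; ring.
Qed.

Lemma is_LM_sscale x g c : c != 0 -> is_LM x g -> is_LM (sscale c x) g.
Proof.
move=> c0 [xg Hg]; split=> [|h]; first by rewrite /sscale mulf_neq0.
by rewrite /sscale mulf_eq0 negb_or => /andP[_ /Hg].
Qed.

Lemma smonE c g h :
  smon c g h = if h == g then c else 0.
Proof. by rewrite /smon; case: (h =P g) => [->|]; case: pselect. Qed.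

Lemma smon_supp c g h : smon c g h != 0 -> h = g.
Proof. by rewrite smonE; case: (h =P g) => //; rewrite eqxx. Qed.

Lemma is_LM_smon c g : c != 0 -> is_LM (smon c g) g.
Proof. by move=> c0; split=> [|h /smon_supp ->]; [rewrite smonE eqxx | left]. Qed.

Lemma smon_neq0 c g : c != 0 -> smon c g <> s0.
Proof. by move=> c0 /(congr1 (fun x => x g)) /eqP; rewrite smonE eqxx (negPf c0). Qed.

Lemma sscale_smon c c' g : sscale c (smon c' g) = smon (c * c') g.
Proof. by apply: funext => h; rewrite /sscale !smonE; case: (h =P g); rewrite ?mulr0. Qed.

Lemma isK_smon (G : set (hexp Phi R)) c g : G g -> isK G (smon c g).
Proof.
move=> Gg; split=> [h /smon_supp -> //|A AS [h Ah]].
have hg := smon_supp (AS h Ah).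
by exists h => // k /AS/smon_supp ->; left.
Qed.

Lemma fsbig_only (I : choiceType) (A : set I) (F : I -> R) j :
  A j -> (forall i, A i -> i <> j -> F i = 0) -> \sum_(i \in A) F i = F j.
Proof.
move=> Aj F0; rewrite -(fsbig_widen [set j] A F) ?fsbig_set1 //; first by move=> i ->.
by move=> i [Ai /= ij]; apply: F0.
Qed.

(* No summability is needed: if every [F i] vanishes at [h] then so does the
   sum, also when it is the junk value of an infinitely supported sum. *)
Lemma is_LM_ssum (I : choiceType) (S : set I) (F : I -> series Phi R)
    (m : I -> hexp Phi R) j :
  S j -> (forall i, S i -> is_LM (F i) (m i)) ->
  (forall i, S i -> i <> j -> hlt (m i) (m j)) ->
  is_LM (ssum S F) (m j) /\ ssum S F (m j) = F j (m j).
Proof.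
move=> Sj LM_F m_lt.
have sum_mj : ssum S F (m j) = F j (m j).
  apply: fsbig_only => // i Si ij; apply: contrapT => /eqP /(LM_F i Si).2 mj_le.
  exact: hlt_irr (hle_lt_trans mj_le (m_lt i Si ij)).
split=> //; split=> [|h sum_h]; first by rewrite sum_mj; case: (LM_F j Sj).
have [i [Si Fih]] : exists i, S i /\ F i h != 0.
  apply: contrapT => nonzero; move: sum_h; rewrite /ssum fsbig1 ?eqxx // => i Si.
  by apply: contrapT => /eqP Fih; apply: nonzero; exists i.
apply: hle_trans ((LM_F i Si).2 h Fih) _.
by have [->|ij] := pselect (i = j); [left | right; apply: m_lt].
Qed.

End Series.

Section HardyDerivation.
Variables (d : Order.disp_t) (Phi : orderType d) (R : realType).
Variables (G : set (hexp Phi R)) (D : series Phi R -> series Phi R).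
Hypotheses (vgG : value_group G) (hardyD : hardy_type G D).
Implicit Types (g h : hexp Phi R) (p q : Phi) (c : R).

Lemma value_group_mul g h : G g -> G h -> G (hmul g h).
Proof. by case: vgG => _ [_ [+ _]]; apply. Qed.

Lemma value_group_div g h : G g -> G h -> G (hdiv g h).
Proof. by case: vgG => _ [_ [_ [Ginv _]]] Gg /Ginv; apply: value_group_mul. Qed.

Lemma value_group_fund p : G (fund R p).
Proof. by case: vgG => _ [_ [_ [_ +]]]; apply. Qed.

Lemma D_fund_neq0 p : D (smon 1 (fund R p)) <> s0.
Proof.
case: hardyD => _ [HD1 _] /(HD1 _ (isK_smon _ (value_group_fund p))) [c].
move/(congr1 (fun x => x (fund R p))) => /eqP.
by rewrite !smonE eqxx (introF eqP (@fund_neq1 _ _ R p)) oner_eq0.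
Qed.

Lemma is_LM_D_fund p : exists2 g, G g & is_LM (D (smon 1 (fund R p))) g.
Proof.
case: hardyD => [[isK_D _] _].
have K := isK_D _ (isK_smon 1 (value_group_fund p)).
have [g LMg] := is_LM_exists K (@D_fund_neq0 p).
by exists g => //; case: K => + _; apply; case: LMg.
Qed.

Lemma thetaE p : theta D p = hdiv (LM (D (smon 1 (fund R p)))) (fund R p).
Proof.
have [g _ LMg] := is_LM_D_fund p.
by rewrite (LM_is_LM LMg); apply/LM_is_LM/is_LM_smulm.
Qed.

Lemma is_LM_dlog p : is_LM (dlog D p) (theta D p).
Proof.
have [g _ LMg] := is_LM_D_fund p.
by rewrite thetaE (LM_is_LM LMg); apply: is_LM_smulm.
Qed.

Lemma value_group_theta p : G (theta D p).
Proof.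
have [g Gg LMg] := is_LM_D_fund p.
by rewrite thetaE (LM_is_LM LMg); apply: value_group_div (value_group_fund p).
Qed.

(* Distinct fundamental monomials are never comparable, so (HD3) is strict. *)
Lemma theta_lt p q : (p < q)%O -> hlt (theta D p) (theta D q).
Proof.
move=> pq; case: hardyD => _ [_ [_ HD3]].
have LM_fund (r : Phi) : LM (smon 1 (fund R r)) = fund R r.
  exact/LM_is_LM/is_LM_smon/oner_neq0.
have sabs_fund (r : Phi) : sabs (smon 1 (fund R r)) = fund R r.
  rewrite /sabs LM_fund /hmax; case: pselect => // - [].
  right; rewrite /hlt; suff -> : hdiv (fund R r) (hinv (fund R r)) =
    hmul (fund R r) (fund R r) by apply: hgt1_mul; apply: hgt1_fund.
  by apply: funext => s; rewrite /hdiv /hmul /hinv opprK.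
have nz (r : Phi) := @smon_neq0 _ _ R 1 (fund R r) (oner_neq0 R).
have [] := HD3 _ _ (isK_smon 1 (value_group_fund q))
  (isK_smon 1 (value_group_fund p)) (nz q) (nz p).
- by rewrite !sabs_fund; apply: hlt_fund.
- by rewrite sabs_fund; apply: hlt1_fund.
rewrite !LM_fund -!thetaE.
case=> [theta_eq [/(_ (esym theta_eq)) [r []]] | //].
rewrite !LM_fund => /is_LF_uniq/(_ (is_LF_fund R q)) rq.
by move/is_LF_uniq/(_ (is_LF_fund R p)) => rp; move: pq; rewrite -rq rp ltxx.
Qed.

Lemma D_smon1 g : G g ->
  D (smon 1 g) = smulm (ssum (hsupp g) (fun p => sscale (g p) (dlog D p))) g.
Proof. by case: hardyD => [[_ [_ [D_mon _]]] _] /D_mon []. Qed.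

Lemma D_smon c g : G g -> D (smon c g) = sscale c (D (smon 1 g)).
Proof.
move=> Gg; case: hardyD => [[_ [_ [_ +]]] _] => /(_ _ (isK_smon c Gg)) [_ ->].
apply: funext => h; have [->|c0] := eqVneq c 0.
  by rewrite /ssum /sscale fsbig1 ?mul0r // => i _; rewrite smonE if_same mul0r.
rewrite /ssum /sscale (fsbig_only (j := g)); rewrite /ssupp /= ?smonE ?eqxx //.
by move=> i /smon_supp.
Qed.

Lemma LT_D_smon c g psi : G g -> is_LF g psi -> c != 0 ->
  LT (D (smon c g)) = smon (c * (g psi * LC (dlog D psi))) (hmul (theta D psi) g).
Proof.
move=> Gg [g_psi g_le] c0.
have [] := @is_LM_ssum _ _ _ _ (hsupp g) (fun p => sscale (g p) (dlog D p))
  (theta D) psi g_psi.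
- by move=> p gp; apply/is_LM_sscale/is_LM_dlog.
- move=> p /g_le + pn; rewrite le_eqVlt => /predU1P[//|].
  exact: theta_lt.
move=> /(is_LM_smulm g) /(is_LM_sscale c0) LM_D sum_theta.
rewrite /LT /LC D_smon // D_smon1 // (LM_is_LM LM_D) /sscale /smulm.
suff -> : hdiv (hmul (theta D psi) g) g = theta D psi by rewrite sum_theta.
by apply: funext => p; rewrite /hdiv /hmul /hinv; ring.
Qed.

End HardyDerivation.

(* The hypothesis a ~/~ theta-hat is what makes psi exist; here psi is given. *)
Theorem mainTheorem5 (d : Order.disp_t) (Phi : orderType d) (R : realType)
    (G : set (hexp Phi R)) (D : series Phi R -> series Phi R)
    (a : series Phi R) (psi : Phi) :
  value_group G -> hardy_type G D ->
  isK G a -> a <> s0 -> ~ is_theta_hat G D (LM a) ->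
  is_LF (hdiv (LM a) (theta D psi)) psi ->
  LT (D (ai_mon D (LM a) psi)) = smon 1%R (LM a) /\
  LT (D (sscale (LC a) (ai_mon D (LM a) psi))) = LT a.
Proof.
move=> vgG hardyD Ka a0 _ LF_beta.
have [al LM_a] := is_LM_exists Ka a0.
have G_beta : G (hdiv (LM a) (theta D psi)).
  apply: value_group_div (value_group_theta vgG hardyD psi) => //.
  by rewrite (LM_is_LM LM_a); case: Ka => + _; apply; case: LM_a.
have LCa0 : LC a != 0 by rewrite /LC (LM_is_LM LM_a); case: LM_a.
have beta_theta : hmul (theta D psi) (hdiv (LM a) (theta D psi)) = LM a.
  by apply: funext => p; rewrite /hdiv /hmul /hinv; ring.
rewrite /ai_mon (LE_is_LF LF_beta) sscale_smon.
set k := _ * LC (dlog D psi).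
have k0 : k != 0 by rewrite mulf_neq0 //; [case: LF_beta | case: (is_LM_dlog vgG hardyD psi)].
rewrite !(LT_D_smon vgG hardyD G_beta LF_beta) ?mulf_neq0 ?invr_eq0 // beta_theta.
by rewrite -mulrA mulVf ?mulr1.
Qed.
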